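(* Let $\omega$ be an LTL$_f$ formula and $\mathcal{E}$ an LTL$_f$ environment specification over $\mathcal{Y}\cup\mathcal{X}$, and let $\sigma_{ag}$ be an agent strategy. Then: (1) The agent anticipates passive responsibility for $\omega$ under $\sigma_{ag}$ and $\mathcal{E}$ if and only if $\sigma_{ag}$ is not dominant for $\neg\omega$ under $\mathcal{E}$. (2) The agent anticipates inexcusable passive responsibility for $\omega$ under $\sigma_{ag}$ and $\mathcal{E}$ if and only if $\sigma_{ag}$ is not best-effort for $\neg\omega$ under $\mathcal{E}$. (3) The agent anticipates active responsibility for $\omega$ under $\sigma_{ag}$ and $\mathcal{E}$ if and only if $\sigma_{ag}$ is winning for $\omega$ under $\mathcal{E}$ and there exists an agent strategy $\sigma'_{ag}$ that is weak for $\neg\omega$ under $\mathcal{E}$.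
   Context: Let $\mathcal{Y}$ and $\mathcal{X}$ be disjoint finite sets of atomic propositions, controlled by the agent and the environment respectively. LTL$_f$ formulas over $\mathcal{Y}\cup\mathcal{X}$ (built from atoms, $\neg$, $\wedge$, strong next $\circ$, until $\mathcal{U}$; weak next $\bullet\omega:=\neg\circ\neg\omega$) are interpreted over finite nonempty traces over $2^{\mathcal{Y}\cup\mathcal{X}}$ with the standard finite-trace semantics ($\pi,i\models\circ\omega$ iff $i<|\pi|-1$ and $\pi,i+1\models\omega$); $\pi\models\omega$ means $\pi,0\models\omega$. An agent strategy is a function $\sigma_{ag}:(2^{\mathcal{X}})^*\to 2^{\mathcal{Y}}\cup\{\mathit{stop}\}$ that is stopping: along every infinite sequence of environment moves there is $k$ such that $\sigma_{ag}$ returns $\mathit{stop}$ on all prefixes of length $\ge k$ and not on shorter prefixes. An environment strategy is a function $\sigma_{env}:(2^{\mathcal{Y}})^+\to 2^{\mathcal{X}}$. The agent moves first. The play $\mathrm{play}(\sigma_{ag},\sigma_{env})$ is the shortest finite trace $(Y_0\cup X_0)\cdots(Y_n\cup X_n)$ with $Y_0=\sigma_{ag}(\lambda)$, $Y_i=\sigma_{ag}(X_0\cdots X_{i-1})$ for $i>0$, $X_j=\sigma_{env}(Y_0\cdots Y_j)$ for all $j$, and $\sigma_{ag}(X_0\cdots X_n)=\mathit{stop}$. An environment strategy enforces an LTL$_f$ formula $\psi$ if for every agent strategy, every finite nonempty prefix of the (possibly infinite) sequence of moves generated by the two strategies satisfies $\psi$. An environment specification is an LTL$_f$ formula $\mathcal{E}$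 enforced by at least one environment strategy; $\Sigma_{\mathcal{E}}$ denotes the set of environment strategies enforcing $\mathcal{E}$. An agent strategy $\sigma_{ag}$ is winning for $\omega$ under $\mathcal{E}$ if $\mathrm{play}(\sigma_{ag},\sigma_{env})\models\omega$ for all $\sigma_{env}\in\Sigma_{\mathcal{E}}$; it is weak for $\omega$ under $\mathcal{E}$ if this holds for some $\sigma_{env}\in\Sigma_{\mathcal{E}}$. For agent strategies $\sigma_1,\sigma_2$: $\sigma_1\ge_{\omega|\mathcal{E}}\sigma_2$ ($\sigma_1$ dominates $\sigma_2$) if for every $\sigma_{env}\in\Sigma_{\mathcal{E}}$, $\mathrm{play}(\sigma_2,\sigma_{env})\models\omega$ implies $\mathrm{play}(\sigma_1,\sigma_{env})\models\omega$; $\sigma_1>_{\omega|\mathcal{E}}\sigma_2$ if $\sigma_1\ge_{\omega|\mathcal{E}}\sigma_2$ and not $\sigma_2\ge_{\omega|\mathcal{E}}\sigma_1$. $\sigma_{ag}$ is dominant for $\omega$ under $\mathcal{E}$ if $\sigma_{ag}\ge_{\omega|\mathcal{E}}\sigma'$ for every agent strategy $\sigma'$; it is best-effort for $\omega$ under $\mathcal{E}$ if there is no agent strategy $\sigma'$ with $\sigma'>_{\omega|\mathcal{E}}\sigma_{ag}$. Responsibility notions. The agent is attributed passive responsibility for $\omega$ under $\sigma_{ag}$ and $\sigma_{env}\in\Sigma_{\mathcal{E}}$ if $\mathrm{play}(\sigma_{ag},\sigma_{env})\models\omega$ and there is an agent strategy $\sigma'_{ag}$ with $\mathrm{play}(\sigma'_{ag},\sigma_{env})\models\neg\omega$;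 it is attributed inexcusable passive responsibility if moreover such $\sigma'_{ag}$ can be chosen with $\sigma'_{ag}\ge_{\neg\omega|\mathcal{E}}\sigma_{ag}$. The agent anticipates (inexcusable) passive responsibility for $\omega$ under $\sigma_{ag}$ and $\mathcal{E}$ if there is $\sigma_{env}\in\Sigma_{\mathcal{E}}$ such that it is attributed (inexcusable) passive responsibility for $\omega$ under $\sigma_{ag}$ and $\sigma_{env}$. The agent anticipates (equivalently, is attributed) active responsibility for $\omega$ under $\sigma_{ag}$ and $\mathcal{E}$ if $\mathrm{play}(\sigma_{ag},\sigma_{env})\models\omega$ for every $\sigma_{env}\in\Sigma_{\mathcal{E}}$ and there exist an agent strategy $\sigma'_{ag}$ and $\sigma'_{env}\in\Sigma_{\mathcal{E}}$ with $\mathrm{play}(\sigma'_{ag},\sigma'_{env})\models\neg\omega$. *)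

From mathcomp Require Import all_boot.
Set Implicit Arguments. Unset Strict Implicit. Unset Printing Implicit Defensive.

(* Atomic propositions: agent-controlled ones of type Y, environment-controlled
   ones of type X; atoms are Y + X, so the two sets are disjoint. *)
Inductive ltlf (Y X : Type) : Type :=
  | Atom of (Y + X)
  | Not of ltlf Y X
  | And of ltlf Y X & ltlf Y X
  | Next of ltlf Y X                (* strong next *)
  | Until of ltlf Y X & ltlf Y X.

Section Semantics.
Variables Y X : finType.

Definition letter := ({set Y} * {set X})%type.
Definition trace := seq letter.

Fixpoint sat_at (pi : trace) (i : nat) (phi : ltlf Y X) : Prop :=
  match phi with
  | Atom (inl y) => y \in (nth (set0, set0) pi i).1
  | Atom (inr x) => x \in (nth (set0, set0) pi i).2
  | Not f => ~ sat_at pi i f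
  | And f g => sat_at pi i f /\ sat_at pi i g
  | Next f => i.+1 < size pi /\ sat_at pi i.+1 f
  | Until f g => exists j, [/\ i <= j, j < size pi, sat_at pi j g &
                            forall k, i <= k -> k < j -> sat_at pi k f]
  end.

Definition sat (pi : trace) (phi : ltlf Y X) : Prop := 0 < size pi /\ sat_at pi 0 phi.

(* Agent functions: None encodes "stop". *)
Definition ag_fun := seq {set X} -> option {set Y}.
(* Environment strategies (2^Y)^+ -> 2^X; the value on the empty history is
   irrelevant (never used). *)
Definition env_fun := seq {set Y} -> {set X}.

(* stopping: along every infinite sequence e of environment moves there is k
   such that the strategy stops exactly on the prefixes of length >= k.
   Plays are nonempty traces, so k >= 1. *)
Definition is_agent_strategy (sag : ag_fun) : Prop :=
  forall e : nat -> {set X}, exists k, 0 < k /\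
    forall n, sag (mkseq e n) = None <-> k <= n.

(* The first n rounds of interaction (agent moves first; a default empty move
   is used if the agent has already stopped -- never relevant for plays). *)
Fixpoint hist (sag : ag_fun) (senv : env_fun) (n : nat) : trace :=
  match n with
  | 0 => [::]
  | n'.+1 =>
      let h := hist sag senv n' in
      let y := odflt set0 (sag (map snd h)) in
      rcons h (y, senv (rcons (map fst h) y))
  end.

(* pi is play(sag, senv): the shortest (nonempty) trace generated by the two
   strategies at whose end the agent stops. *)
Definition is_play (sag : ag_fun) (senv : env_fun) (pi : trace) : Prop :=
  exists n, [/\ pi = hist sag senv n.+1,
               sag (map snd pi) = None &
               forall m, m <= n -> sag (map snd (hist sag senv m)) <> None].

Definition play_sat (sag : ag_fun) (senv : env_fun) (phi : ltlf Y X) : Prop :=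
  exists pi, is_play sag senv pi /\ sat pi phi.

Definition enforces (senv : env_fun) (psi : ltlf Y X) : Prop :=
  forall sag, is_agent_strategy sag ->
  forall pi, is_play sag senv pi ->
  forall n, 0 < n -> n <= size pi -> sat (take n pi) psi.

Definition is_env_spec (E : ltlf Y X) : Prop := exists senv, enforces senv E.

Definition winning (sag : ag_fun) (w E : ltlf Y X) : Prop :=
  forall senv, enforces senv E -> play_sat sag senv w.

Definition weak (sag : ag_fun) (w E : ltlf Y X) : Prop :=
  exists senv, enforces senv E /\ play_sat sag senv w.

Definition dominates (s1 s2 : ag_fun) (w E : ltlf Y X) : Prop :=
  forall senv, enforces senv E -> play_sat s2 senv w -> play_sat s1 senv w.

Definition strictly_dominates (s1 s2 : ag_fun) (w E : ltlf Y X) : Prop :=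
  dominates s1 s2 w E /\ ~ dominates s2 s1 w E.

Definition dominant (sag : ag_fun) (w E : ltlf Y X) : Prop :=
  forall s', is_agent_strategy s' -> dominates sag s' w E.

Definition best_effort (sag : ag_fun) (w E : ltlf Y X) : Prop :=
  ~ exists s', is_agent_strategy s' /\ strictly_dominates s' sag w E.

Definition attr_passive (sag : ag_fun) (senv : env_fun) (w : ltlf Y X) : Prop :=
  play_sat sag senv w /\
  exists s', is_agent_strategy s' /\ play_sat s' senv (Not w).

Definition attr_inexcusable_passive (sag : ag_fun) (senv : env_fun) (w E : ltlf Y X) : Prop :=
  play_sat sag senv w /\
  exists s', [/\ is_agent_strategy s', play_sat s' senv (Not w) &
                 dominates s' sag (Not w) E].

Definition anticipates_passive (sag : ag_fun) (w E : ltlf Y X) : Prop :=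
  exists senv, enforces senv E /\ attr_passive sag senv w.

Definition anticipates_inexcusable_passive (sag : ag_fun) (w E : ltlf Y X) : Prop :=
  exists senv, enforces senv E /\ attr_inexcusable_passive sag senv w E.

Definition anticipates_active (sag : ag_fun) (w E : ltlf Y X) : Prop :=
  (forall senv, enforces senv E -> play_sat sag senv w) /\
  exists s' senv', [/\ is_agent_strategy s', enforces senv' E &
                      play_sat s' senv' (Not w)].

End Semantics.

(* Once the agent's strategy is fixed, the environment strategy determines the
   play, which exists because agent strategies stop and is unique because it is
   the shortest stopping prefix.  Hence play(sag, senv) satisfies [Not w]
   exactly when it does not satisfy [w], and the three responsibility notions
   unfold, classically, into the negations of the dominance, best-effort and
   winning/weak conditions for [Not w]. *)
From Stdlib Require Import Classical.
From mathcomp Require Import all_boot.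

Set Implicit Arguments.
Unset Strict Implicit.
Unset Printing Implicit Defensive.

Section Plays.
Variables Y X : finType.
Implicit Types (sag : ag_fun Y X) (senv : env_fun Y X) (phi : ltlf Y X).

Lemma size_hist sag senv n : size (hist sag senv n) = n.
Proof. by elim: n => //= n IHn; rewrite size_rcons IHn. Qed.

Definition env_moves sag senv (i : nat) : {set X} :=
  (nth (set0, set0) (hist sag senv i.+1) i).2.

Lemma map_snd_hist sag senv n :
  map snd (hist sag senv n) = mkseq (env_moves sag senv) n.
Proof.
elim: n => // n IHn; rewrite mkseqS -IHn /env_moves.
by rewrite [hist _ _ n.+1]/= map_rcons nth_rcons size_hist ltnn eqxx.
Qed.

Lemma play_exists sag senv :
  is_agent_strategy sag -> exists pi, is_play sag senv pi.
Proof.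
move=> /(_ (env_moves sag senv)) [k [k_gt0 stopk]].
exists (hist sag senv k), k.-1; rewrite prednK //.
split=> [||m le_m_predk]; rewrite // map_snd_hist.
  exact/stopk.
rewrite -ltnS prednK // in le_m_predk.
by move/stopk; rewrite leqNgt le_m_predk.
Qed.

Lemma play_unique sag senv pi1 pi2 :
  is_play sag senv pi1 -> is_play sag senv pi2 -> pi1 = pi2.
Proof.
move=> [n1 [-> stop1 run1]] [n2 [-> stop2 run2]].
have le12 : n1 <= n2 by case: leqP => // /run1.
have le21 : n2 <= n1 by case: leqP => // /run2.
by have /eqP -> : n1 == n2 by rewrite eqn_leq le12 le21.
Qed.

Lemma size_play_gt0 sag senv pi : is_play sag senv pi -> 0 < size pi.
Proof. by move=> [n [-> _ _]]; rewrite size_hist. Qed.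

Lemma play_sat_Not sag : is_agent_strategy sag -> forall senv phi,
  play_sat sag senv (Not phi) <-> ~ play_sat sag senv phi.
Proof.
move=> sag_strat senv phi; split.
  move=> [pi [play_pi [_ not_phi]]] [pi' [play_pi' [_ phi_pi']]].
  by apply: not_phi; rewrite (play_unique play_pi play_pi').
move=> not_phi; have [pi play_pi] := play_exists senv sag_strat.
have pi_gt0 := size_play_gt0 play_pi.
exists pi; split=> //; split=> // phi_pi.
by apply: not_phi; exists pi.
Qed.

Lemma play_sat_NotN sag : is_agent_strategy sag -> forall senv phi,
  ~ play_sat sag senv (Not phi) <-> play_sat sag senv phi.
Proof.
move=> sag_strat senv phi; rewrite play_sat_Not //.
by split=> [/NNPP | sat_phi /(_ sat_phi)].
Qed.

Lemma not_dominatesP s1 s2 phi (E : ltlf Y X) :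
  ~ dominates s1 s2 phi E <->
  exists senv, [/\ enforces senv E, play_sat s2 senv phi & ~ play_sat s1 senv phi].
Proof.
split=> [not_dom | [senv [enf sat2 not_sat1]] dom]; last exact/not_sat1/dom.
apply: NNPP => no_senv; apply: not_dom => senv enf sat2.
by apply: NNPP => not_sat1; apply: no_senv; exists senv.
Qed.

Lemma not_dominantP sag phi (E : ltlf Y X) :
  ~ dominant sag phi E <->
  exists s', is_agent_strategy s' /\ ~ dominates sag s' phi E.
Proof.
split=> [not_dom | [s' [s'_strat not_dom]] dom]; last exact/not_dom/dom.
apply: NNPP => no_s'; apply: not_dom => s' s'_strat.
by apply: NNPP => not_dom; apply: no_s'; exists s'.
Qed.

Variables (w E : ltlf Y X) (sag : ag_fun Y X).
Hypothesis sag_strat : is_agent_strategy sag.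

Lemma anticipates_passiveP : anticipates_passive sag w E <-> ~ dominant sag (Not w) E.
Proof.
rewrite not_dominantP; split.
  move=> [senv [enf [sat_w [s' [s'_strat sat'_Not]]]]].
  exists s'; split=> //; apply/not_dominatesP; exists senv.
  by split=> //; rewrite (play_sat_NotN sag_strat).
move=> [s' [s'_strat /not_dominatesP [senv [enf sat'_Not]]]].
move=> /(play_sat_NotN sag_strat _ w) sat_w.
by exists senv; split=> //; split; [exact: sat_w | exists s'].
Qed.

Lemma anticipates_inexcusable_passiveP :
  anticipates_inexcusable_passive sag w E <-> ~ best_effort sag (Not w) E.
Proof.
rewrite /best_effort; split.
  move=> [senv [enf [sat_w [s' [s'_strat sat'_Not dom]]]]] no_better.
  apply: no_better; exists s'; do !split=> //; apply/not_dominatesP; exists senv.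
  by split=> //; rewrite (play_sat_NotN sag_strat).
move=> /NNPP [s' [s'_strat [dom /not_dominatesP [senv [enf sat'_Not]]]]].
move=> /(play_sat_NotN sag_strat _ w) sat_w.
by exists senv; split=> //; split; [exact: sat_w | exists s'].
Qed.

Lemma anticipates_activeP : anticipates_active sag w E <->
  winning sag w E /\ exists s', is_agent_strategy s' /\ weak s' (Not w) E.
Proof.
split=> [[win [s' [senv [s'_strat enf sat'_Not]]]] |].
  by split=> //; exists s'; split=> //; exists senv.
move=> [win [s' [s'_strat [senv [enf sat'_Not]]]]].
by split=> //; exists s', senv.
Qed.

End Plays.

Theorem theorem1 (Y X : finType) (w E : ltlf Y X) (sag : ag_fun Y X) :
  is_env_spec E -> is_agent_strategy sag ->
  [/\ anticipates_passive sag w E <-> ~ dominant sag (Not w) E,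
      anticipates_inexcusable_passive sag w E <-> ~ best_effort sag (Not w) E &
      anticipates_active sag w E <->
        (winning sag w E /\
         exists s', is_agent_strategy s' /\ weak s' (Not w) E)].
Proof.
move=> _ sag_strat; split.
- exact: anticipates_passiveP.
- exact: anticipates_inexcusable_passiveP.
- exact: anticipates_activeP.
Qed.
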